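(* Let $f:\mathbb{R}^p\times\mathbb{R}^N\to\mathbb{R}$ be differentiable with $M$-Lipschitz joint gradient, i.e. there is $M>0$ with $\|(\nabla_xf(x_1,z_1)-\nabla_xf(x_2,z_2),\nabla_zf(x_1,z_1)-\nabla_zf(x_2,z_2))\|\le M\|(x_1-x_2,z_1-z_2)\|$ for all $x_1,x_2,z_1,z_2$, and let $g:\mathbb{R}^p\to\mathbb{R}\cup\{\infty\}$ and $h:\mathbb{R}^N\to\mathbb{R}\cup\{\infty\}$ be proper, lower semicontinuous and directionally differentiable. Let $x_t\in\mathbb{R}^p$, $z_t\in\mathbb{R}^N$, $\eta_t^x,\eta_t^z>0$, and $$x_{t+1}\in\operatorname{Prox}_{g/\eta_t^x}\Big(x_t-\tfrac1{\eta_t^x}\nabla_xf(x_t,z_t)\Big),\qquad z_{t+1}\in\operatorname{Prox}_{h/\eta_t^z}\Big(z_t-\tfrac1{\eta_t^z}\nabla_zf(x_{t+1},z_t)\Big).$$ Define $\epsilon_t^x:=\eta_t^x(x_{t+1}-x_t)+\nabla_xf(x_t,z_t)-\nabla_xf(x_{t+1},z_{t+1})$ and $\epsilon_t^z:=\eta_t^z(z_{t+1}-z_t)+\nabla_zf(x_{t+1},z_t)-\nabla_zf(x_{t+1},z_{t+1})$. Then for all $d_x\in\mathbb{R}^p$, $d_z\in\mathbb{R}^N$, $$-\|\epsilon_t^x\|\|d_x\|-\|\epsilon_t^z\|\|d_z\|\le g'(x_{t+1};d_x)+h'(z_{t+1};d_z)+\langle\nabla_xf(x_{t+1},z_{t+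1}),d_x\rangle+\langle\nabla_zf(x_{t+1},z_{t+1}),d_z\rangle.$$
   Context: $\|\cdot\|$ is the Euclidean norm. $\operatorname{Prox}_{\phi/\eta}(y):=\operatorname{argmin}_{u}\{\tfrac1\eta\phi(u)+\tfrac12\|u-y\|^2\}$. The directional derivative is $\phi'(u;d):=\lim_{\tau\to+0}\frac{\phi(u+\tau d)-\phi(u)}{\tau}$ (possibly $+\infty$); directionally differentiable means this limit exists for all $d$ and all $u\in\operatorname{dom}\phi$. *)

From HB Require Import structures.
From mathcomp Require Import all_boot all_order all_algebra.
From mathcomp Require Import all_classical all_reals all_analysis.
Set Implicit Arguments. Unset Strict Implicit. Unset Printing Implicit Defensive.
Import Order.TTheory GRing.Theory Num.Theory.
Import numFieldNormedType.Exports.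
Local Open Scope ring_scope.
Local Open Scope classical_set_scope.

Section Defs.
Variable R : realType.

Definition vdot n (u v : 'rV[R]_n) : R := \sum_(i < n) u ord0 i * v ord0 i.
Definition vnorm n (v : 'rV[R]_n) : R := Num.sqrt (vdot v v).
Definition pnorm p N (u : 'rV[R]_p) (v : 'rV[R]_N) : R :=
  Num.sqrt (vdot u u + vdot v v).

Definition has_grad p N (f : 'rV[R]_p -> 'rV[R]_N -> R)
  (gx : 'rV[R]_p -> 'rV[R]_N -> 'rV[R]_p) (gz : 'rV[R]_p -> 'rV[R]_N -> 'rV[R]_N) :=
  forall x z, forall eps : R, 0 < eps -> exists2 delta : R, 0 < delta &
    forall (hx : 'rV[R]_p) (hz : 'rV[R]_N), pnorm hx hz < delta ->
      `| f (x + hx) (z + hz) - f x z - vdot (gx x z) hx - vdot (gz x z) hz |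
        <= eps * pnorm hx hz.

Definition proper_fun n (g : 'rV[R]_n -> \bar R) :=
  (forall x, g x != -oo%E) /\ exists x, g x \is a fin_num.

Definition lsc n (g : 'rV[R]_n -> \bar R) :=
  forall x (a : R), (a%:E < g x)%E -> exists2 delta : R, 0 < delta &
    forall y, vnorm (y - x) < delta -> (a%:E < g y)%E.

Definition dquot n (g : 'rV[R]_n -> \bar R) (u d : 'rV[R]_n) (tau : R) : \bar R :=
  ((g (u + tau *: d)%R - g u) * (tau^-1)%:E)%E.

Definition dirder n (g : 'rV[R]_n -> \bar R) (u d : 'rV[R]_n) : \bar R :=
  lim (dquot g u d tau @[tau --> 0^'+]).

Definition dir_diff n (g : 'rV[R]_n -> \bar R) :=
  forall u d, g u \is a fin_num ->
    exists l : \bar R, dquot g u d tau @[tau --> 0^'+] --> l.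

Definition in_prox n (g : 'rV[R]_n -> \bar R) (eta : R) (y x : 'rV[R]_n) :=
  forall u, (eta^-1%:E * g x + (2^-1 * vnorm (x - y) ^+ 2)%:E
             <= eta^-1%:E * g u + (2^-1 * vnorm (u - y) ^+ 2)%:E)%E.

End Defs.

(** The proximal optimality condition of [u |-> g u / eta + |u - y|^2 / 2] at
    [x], tested along the ray [x + t d], gives the difference-quotient bound
    [(g (x + t d) - g x) / t >= - <eta (x - y), d> - eta t |d|^2 / 2], hence
    [g'(x; d) >= - <eta (x - y), d>] as [t -> 0+].  For a proximal gradient step
    [y = x0 - G / eta], the vector [eta (x - y)] equals [eps + G'] with [eps]
    the residual and [G'] the gradient at the new point, and Cauchy-Schwarz
    turns [- <eps, d>] into [- |eps| |d|].  Summing the [x]- and [z]-blocks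
    gives the theorem. *)
From HB Require Import structures.
From mathcomp Require Import all_boot all_order all_algebra.
From mathcomp Require Import all_classical all_reals all_analysis.
From mathcomp Require Import ring lra.
Set Implicit Arguments. Unset Strict Implicit. Unset Printing Implicit Defensive.
Import Order.TTheory GRing.Theory Num.Theory.
Import numFieldNormedType.Exports.
Local Open Scope ring_scope.
Local Open Scope classical_set_scope.

Section EuclideanRowVectors.
Variables (R : realType) (n : nat).
Implicit Types (u v w : 'rV[R]_n) (a : R).

Lemma vdotC u v : vdot u v = vdot v u.
Proof. by apply: eq_bigr => i _; rewrite mulrC. Qed.

Lemma vdotDl u v w : vdot (u + v) w = vdot u w + vdot v w.
Proof. by rewrite /vdot -big_split; apply: eq_bigr => i _; rewrite mxE mulrDl. Qed.

Lemma vdotZl a u w : vdot (a *: u) w = a * vdot u w.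
Proof. by rewrite /vdot mulr_sumr; apply: eq_bigr => i _; rewrite mxE mulrA. Qed.

Lemma vdotBl u v w : vdot (u - v) w = vdot u w - vdot v w.
Proof. by rewrite vdotDl -scaleN1r vdotZl mulN1r. Qed.

Lemma vdotDr u v w : vdot w (u + v) = vdot w u + vdot w v.
Proof. by rewrite vdotC vdotDl !(vdotC w). Qed.

Lemma vdotZr a u w : vdot w (a *: u) = a * vdot w u.
Proof. by rewrite vdotC vdotZl vdotC. Qed.

Lemma vdot0l w : vdot 0 w = 0.
Proof. by rewrite -(scale0r 0) vdotZl mul0r. Qed.

Lemma vdot_self_ge0 u : 0 <= vdot u u.
Proof. by apply: sumr_ge0 => i _; rewrite -expr2 sqr_ge0. Qed.

Lemma vdot_self_eq0 u : vdot u u = 0 -> u = 0.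
Proof.
move=> /eqP; rewrite psumr_eq0 => [/allP u0|i _]; last by rewrite -expr2 sqr_ge0.
apply/rowP => i; rewrite mxE.
by have := u0 i (mem_index_enum i); rewrite /= mulf_eq0 orbb => /eqP.
Qed.

Lemma vdot_selfD u v : vdot (u + v) (u + v) = vdot u u + 2 * vdot u v + vdot v v.
Proof. by rewrite !vdotDl !vdotDr (vdotC v u); ring. Qed.

Lemma vnorm_ge0 u : 0 <= vnorm u.
Proof. exact: sqrtr_ge0. Qed.

Lemma vnorm_sqr u : vnorm u ^+ 2 = vdot u u.
Proof. by rewrite sqr_sqrtr // vdot_self_ge0. Qed.

Lemma vnorm_eq0 u : vnorm u = 0 -> u = 0.
Proof. by move=> u0; apply: vdot_self_eq0; rewrite -vnorm_sqr u0 expr0n. Qed.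

Lemma vdot_le_vnorm u v : vdot u v <= vnorm u * vnorm v.
Proof.
have [u0|/eqP un0] := eqVneq (vnorm u) 0; first by rewrite u0 mul0r (vnorm_eq0 u0) vdot0l.
have [v0|/eqP vn0] := eqVneq (vnorm v) 0.
  by rewrite v0 mulr0 (vnorm_eq0 v0) vdotC vdot0l.
set a := vnorm u; set b := vnorm v.
have ab_gt0 : 0 < a * b by rewrite mulr_gt0 // lt0r vnorm_ge0 andbT; apply/eqP.
(* |b u - a v|^2 = 2 a b (a b - <u, v>) *)
have := vdot_self_ge0 (b *: u - a *: v).
rewrite !vdotBl -!(vdotC (_ - _)) !vdotBl !vdotZl !vdotZr -!vnorm_sqr -/a -/b vdotC => sq_ge0.
have : 0 <= (a * b) * (2 * (a * b - vdot u v)) by move: sq_ge0; nra.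
by rewrite pmulr_rge0 //; lra.
Qed.

End EuclideanRowVectors.

Lemma cvg_EFin_affine_at_right (R : realType) (r c : R) :
  (r - c * t)%:E @[t --> 0^'+] --> r%:E.
Proof.
apply: cvg_EFin; first by near=> t.
apply: cvg_within_filter.
have : (fun t : R => r - c * t) @ (0 : R) --> r - c * 0.
  by apply: cvgB; [exact: cvg_cst | apply: cvgM; [exact: cvg_cst | exact: cvg_id]].
by rewrite mulr0 subr0.
Unshelve. all: end_near.
Qed.

Lemma dirder_ge (R : realType) n (g : 'rV[R]_n -> \bar R) u d (r c : R) :
  dir_diff g -> g u \is a fin_num ->
  (forall t, 0 < t -> ((r - c * t)%:E <= dquot g u d t)%E) ->
  (r%:E <= dirder g u d)%E.
Proof.
move=> gdd gu dquot_ge; have [l dquot_l] := gdd u d gu.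
rewrite /dirder (cvg_lim _ dquot_l) //.
apply: (lee_cvg_to (@cvg_EFin_affine_at_right _ r c) dquot_l).
by near=> t; apply: dquot_ge; near: t; exact: nbhs_right_gt.
Unshelve. all: end_near.
Qed.

Section ProximalPoint.
Variables (R : realType) (n : nat) (g : 'rV[R]_n -> \bar R) (eta : R) (y x : 'rV[R]_n).
Hypotheses (eta_gt0 : 0 < eta) (g_proper : proper_fun g) (x_prox : in_prox g eta y x).

Lemma in_prox_fin_num : g x \is a fin_num.
Proof.
have [g_ninf [u0 gu0]] := g_proper.
move: (x_prox u0) (g_ninf x); case: (g x) => // /[swap] _.
rewrite gt0_muley ?lte_fin ?invr_gt0 // addye // leye_eq => /eqP rhs_oo.
by rewrite -rhs_oo fin_numD fin_numM.
Qed.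

Lemma in_prox_dquot_ge d t : 0 < t ->
  ((- vdot (eta *: (x - y)) d - eta / 2 * vdot d d * t)%:E <= dquot g x d t)%E.
Proof.
move=> t_gt0; have [g_ninf _] := g_proper.
have [gx gxE] : exists gx : R, g x = gx%:E.
  by exists (fine (g x)); rewrite fineK //; exact: in_prox_fin_num.
move: (x_prox (x + t *: d)) (g_ninf (x + t *: d)); rewrite /dquot gxE.
case: (g (x + t *: d)) => [s| |] //= prox_ineq _; last first.
  by rewrite addye // gt0_mulye ?lte_fin ?invr_gt0 // leey.
rewrite -EFinD -EFinM lee_fin ler_pdivlMr //.
move: prox_ineq; rewrite -!EFinM -!EFinD lee_fin addrAC !vnorm_sqr.
rewrite (vdot_selfD (x - y)) !vdotZl !vdotZr => prox_ineq.
have eta_inv_cancel r : r = eta * (eta^-1 * r) by rewrite mulVKf ?gt_eqF.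
rewrite [s]eta_inv_cancel [gx]eta_inv_cancel.
by move: prox_ineq => /(ler_wpM2l (ltW eta_gt0)); lra.
Qed.

Lemma in_prox_dirder_ge d : dir_diff g ->
  ((- vdot (eta *: (x - y)) d)%:E <= dirder g x d)%E.
Proof.
move=> gdd; apply: (dirder_ge (c := eta / 2 * vdot d d) gdd in_prox_fin_num).
exact: in_prox_dquot_ge.
Qed.

End ProximalPoint.

Lemma prox_grad_step_dirder_ge (R : realType) n (g : 'rV[R]_n -> \bar R)
    (eta : R) (x0 x G G' d : 'rV[R]_n) :
  0 < eta -> proper_fun g -> dir_diff g -> in_prox g eta (x0 - eta^-1 *: G) x ->
  ((- (vnorm (eta *: (x - x0) + G - G') * vnorm d) - vdot G' d)%:E
    <= dirder g x d)%E.
Proof.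
move=> eta_gt0 g_proper gdd x_prox.
apply: le_trans (in_prox_dirder_ge eta_gt0 g_proper x_prox d gdd).
have -> : eta *: (x - (x0 - eta^-1 *: G)) = (eta *: (x - x0) + G - G') + G'.
  rewrite subrK opprB !scalerDr scalerA mulfV ?gt_eqF // scale1r.
  by rewrite -addrA (addrC G).
rewrite lee_fin vdotDl opprD lerD2r lerN2; exact: vdot_le_vnorm.
Qed.

Theorem lemma2 (R : realType) (p N : nat)
  (f : 'rV[R]_p -> 'rV[R]_N -> R)
  (gx : 'rV[R]_p -> 'rV[R]_N -> 'rV[R]_p) (gz : 'rV[R]_p -> 'rV[R]_N -> 'rV[R]_N)
  (M : R) (g : 'rV[R]_p -> \bar R) (h : 'rV[R]_N -> \bar R)
  (xt x1 : 'rV[R]_p) (zt z1 : 'rV[R]_N) (etax etaz : R) :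
  has_grad f gx gz ->
  0 < M ->
  (forall x1' x2' z1' z2',
      pnorm (gx x1' z1' - gx x2' z2') (gz x1' z1' - gz x2' z2')
        <= M * pnorm (x1' - x2') (z1' - z2')) ->
  proper_fun g -> lsc g -> dir_diff g ->
  proper_fun h -> lsc h -> dir_diff h ->
  0 < etax -> 0 < etaz ->
  in_prox g etax (xt - etax^-1 *: gx xt zt) x1 ->
  in_prox h etaz (zt - etaz^-1 *: gz x1 zt) z1 ->
  let epsx := etax *: (x1 - xt) + gx xt zt - gx x1 z1 in
  let epsz := etaz *: (z1 - zt) + gz x1 zt - gz x1 z1 in
  forall (dx : 'rV[R]_p) (dz : 'rV[R]_N),
    ((- (vnorm epsx * vnorm dx) - vnorm epsz * vnorm dz)%:E
      <= dirder g x1 dx + dirder h z1 dz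
         + (vdot (gx x1 z1) dx)%:E + (vdot (gz x1 z1) dz)%:E)%E.
Proof.
move=> _ _ _ g_proper _ gdd h_proper _ hdd etax_gt0 etaz_gt0 x1_prox z1_prox epsx epsz dx dz.
have gx_bound := prox_grad_step_dirder_ge (gx x1 z1) dx etax_gt0 g_proper gdd x1_prox.
have gz_bound := prox_grad_step_dirder_ge (gz x1 z1) dz etaz_gt0 h_proper hdd z1_prox.
apply: le_trans (leeD (leeD (leeD gx_bound gz_bound) (lexx _)) (lexx _)).
by rewrite -!EFinD lee_fin -/epsx -/epsz; lra.
Qed.
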